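(* Fix $q\ge2$ and $z\in\mathbb Z$, let $k=\lceil\log_q n\rceil+z$, $n'=n-k-2$ and $\Delta_n=\log_q n-\lceil\log_q n\rceil$. Then $$\lim_{n\to\infty}\frac{2^{n'E_{k,q}}}{\frac{q^n}{n}\cdot q^{\Delta_n-z-2}\,e^{-(q-1)q^{\Delta_n-z-1}}}=1.$$
   Context: $\Sigma_q=\{0,\dots,q-1\}$. A vector in $\Sigma_q^m$ is a $k$-RLL vector if $m<k$ or it has no run of $k$ consecutive zeros; $a_q(m,k)$ is their number, and $E_{k,q}=\lim_{m\to\infty}\frac{\log_2 a_q(m,k)}{m}$. It is known (Jain et al.) that $\lim_{k\to\infty}\frac{(q-1)(\log_2 e)q^{-k-2}}{\log_2 q-E_{k,q}}=1$. *)

From Stdlib Require Import Reals List Arith ZArith ClassicalEpsilon.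
Import ListNotations.
Open Scope R_scope.

Fixpoint words (q m : nat) : list (list nat) :=
  match m with
  | O => [ [] ]
  | S m' => flat_map (fun a => map (fun w => a :: w) (words q m')) (seq 0 q)
  end.

(* w contains a run of k consecutive zeros (k >= 1 for meaningful use). *)
Definition has_zero_run (k : nat) (w : list nat) : bool :=
  existsb (fun i => forallb (fun j => Nat.eqb (nth (i + j) w 1%nat) 0) (seq 0 k))
          (seq 0 (length w - k + 1)).

Definition is_RLL (k : nat) (w : list nat) : bool :=
  Nat.ltb (length w) k || negb (has_zero_run k w).

Definition a_q (q m k : nat) : nat := length (filter (is_RLL k) (words q m)).

Definition log2 (x : R) : R := ln x / ln 2.

(* E_{k,q} := lim_{m -> oo} log2 (a_q(m,k)) / m  (the limit, chosen by
   Hilbert's epsilon; limits in R are unique). *)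
Definition E_kq (k q : nat) : R :=
  epsilon (inhabits 0)
    (fun l => Un_cv (fun m => log2 (INR (a_q q m k)) / INR m) l).

Definition logb (q x : R) : R := ln x / ln q.
Definition Rceil (x : R) : Z := (- Int_part (- x))%Z.

(* Let lam_k be the root in (1, q) of lam^k (q - lam) = q - 1.  Sorting words by the
   length c of a zero prefix gives a linear recurrence of which lam_k^m u_c, with
   u_c = (q - 1 - lam_k^c (q - lam_k)) / (lam_k - 1), is an explicit solution; since the
   recurrence preserves signs, a_q(m,k) lies between constant multiples of lam_k^m and
   E_{k,q} = log2 lam_k.  Bernoulli's inequality places lam_k within 2(q-1)q^-k of q.
   With n = rho q^(k+1), the logarithm of the ratio in the theorem is exactly
   n' (ln lam_k - ln q) + (q - 1) rho, which the location of lam_k makes O(k q^-k)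
   uniformly in the bounded factor rho; as k grows with n, the ratio tends to 1. *)

From Stdlib Require Import Reals ZArith Lra Lia List Bool ClassicalEpsilon.
From Coquelicot Require Import Coquelicot.
Import ListNotations.

Definition zero_run_at (k i : nat) (w : list nat) : bool :=
  forallb (fun j => Nat.eqb (nth (i + j) w 1%nat) 0) (seq 0 k).

Fixpoint leading_zeros (w : list nat) : nat :=
  match w with
  | [] => 0
  | a :: w' => if Nat.eqb a 0 then S (leading_zeros w') else 0
  end.

Lemma forallb_seq_S (f : nat -> bool) s k :
  forallb f (seq (S s) k) = forallb (fun j => f (S j)) (seq s k).
Proof. revert s; induction k as [|k IH]; intros s; simpl; now rewrite ?IH. Qed.

Lemma zero_run_at_0 k w : zero_run_at k 0 w = Nat.leb k (leading_zeros w).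
Proof.
  revert w; induction k as [|k IH]; intros w; [reflexivity|].
  unfold zero_run_at; simpl seq; cbn [forallb]; rewrite forallb_seq_S.
  destruct w as [|a w]; [reflexivity|].
  specialize (IH w); unfold zero_run_at in IH; simpl in IH |- *; rewrite IH.
  now destruct (Nat.eqb a 0).
Qed.

Lemma zero_run_at_overflow k i w :
  (1 <= k)%nat -> (length w < i + k)%nat -> zero_run_at k i w = false.
Proof.
  intros Hk Hw; apply not_true_iff_false; intros H.
  unfold zero_run_at in H; rewrite forallb_forall in H.
  assert (Hin : In (k - 1)%nat (seq 0 k)) by (apply in_seq; lia).
  specialize (H _ Hin); now rewrite nth_overflow in H by lia.
Qed.

Lemma has_zero_run_spec k w :
  (1 <= k)%nat -> has_zero_run k w = true <-> exists i, zero_run_at k i w = true.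
Proof.
  intros Hk; unfold has_zero_run; rewrite existsb_exists; split.
  - intros [i [_ H]]; now exists i.
  - intros [i H]; exists i; split; [|exact H].
    apply in_seq; destruct (Nat.lt_ge_cases (length w) (i + k)); [|lia].
    now rewrite zero_run_at_overflow in H.
Qed.

Lemma has_zero_run_cons k a w : (1 <= k)%nat ->
  has_zero_run k (a :: w) = has_zero_run k w || Nat.leb k (leading_zeros (a :: w)).
Proof.
  intros Hk; apply eq_iff_eq_true; rewrite orb_true_iff, !has_zero_run_spec by exact Hk.
  rewrite <- zero_run_at_0; split.
  - intros [[|i] H]; [now right | left; now exists i].
  - intros [[i H]|H]; [now exists (S i) | now exists 0%nat].
Qed.

Lemma leading_zeros_lt k w : (1 <= k)%nat ->
  has_zero_run k w = false -> (leading_zeros w < k)%nat.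
Proof.
  intros Hk H; apply Nat.nle_gt; intros Hle.
  enough (has_zero_run k w = true) by congruence.
  apply has_zero_run_spec; [exact Hk|]; exists 0%nat.
  now rewrite zero_run_at_0; apply Nat.leb_le.
Qed.

Lemma is_RLL_no_zero_run k w : (1 <= k)%nat -> is_RLL k w = negb (has_zero_run k w).
Proof.
  intros Hk; unfold is_RLL; destruct (Nat.ltb_spec (length w) k); [|reflexivity].
  destruct (has_zero_run k w) eqn:E; [|reflexivity].
  apply has_zero_run_spec in E as [i E]; [|exact Hk].
  now rewrite zero_run_at_overflow in E by lia.
Qed.

(* [padded_RLL k c w]: the word [0^c ++ w] has no run of [k] zeros. *)
Definition padded_RLL (k c : nat) (w : list nat) : bool :=
  negb (has_zero_run k w) && Nat.ltb (leading_zeros w + c) k.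

Definition padded_count (q k m c : nat) : nat :=
  length (filter (padded_RLL k c) (words q m)).

Lemma padded_RLL_cons_0 k c w : (1 <= k)%nat ->
  padded_RLL k c (0%nat :: w) = padded_RLL k (S c) w.
Proof.
  intros Hk; unfold padded_RLL; rewrite has_zero_run_cons by exact Hk; simpl.
  destruct (has_zero_run k w); [reflexivity|]; simpl.
  destruct (Nat.leb_spec k (S (leading_zeros w)));
    destruct (Nat.ltb_spec (S (leading_zeros w + c)) k);
    destruct (Nat.ltb_spec (leading_zeros w + S c) k); simpl; lia.
Qed.

Lemma padded_RLL_cons_nonzero k c a w : (1 <= k)%nat -> a <> 0%nat ->
  padded_RLL k c (a :: w) = Nat.ltb c k && padded_RLL k 0 w.
Proof.
  intros Hk Ha; unfold padded_RLL; rewrite has_zero_run_cons by exact Hk; simpl.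
  apply Nat.eqb_neq in Ha; rewrite Ha.
  destruct (has_zero_run k w) eqn:E; simpl; [now rewrite andb_false_r|].
  apply leading_zeros_lt in E; [|exact Hk].
  destruct (Nat.leb_spec k 0); [lia|].
  destruct (Nat.ltb_spec (leading_zeros w + 0) k); [|lia].
  now rewrite andb_true_r.
Qed.

Lemma length_filter_map_cons (f : list nat -> bool) a W :
  length (filter f (map (cons a) W)) = length (filter (fun w => f (a :: w)) W).
Proof. induction W as [|w W IH]; simpl; [|destruct (f (a :: w)); simpl]; auto. Qed.

Lemma length_filter_flat_map_const (f : list nat -> bool) W s v :
  (forall a, In a s -> length (filter f (map (cons a) W)) = v) ->
  length (filter f (flat_map (fun a => map (cons a) W) s)) = (length s * v)%nat.
Proof.
  induction s as [|a s IH]; intros H; simpl; [reflexivity|].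
  rewrite filter_app, length_app, H, IH; [reflexivity| |now left].
  intros b Hb; apply H; now right.
Qed.

Lemma padded_count_S q k m c : (1 <= k)%nat -> (1 <= q)%nat ->
  padded_count q k (S m) c =
  (padded_count q k m (S c) + (q - 1) * (if Nat.ltb c k then padded_count q k m 0 else 0))%nat.
Proof.
  intros Hk Hq; unfold padded_count; simpl words.
  destruct q as [|q]; [lia|]; simpl seq; cbn [flat_map].
  rewrite filter_app, length_app, length_filter_map_cons.
  f_equal; [now apply f_equal, filter_ext; intros w; apply padded_RLL_cons_0|].
  rewrite length_filter_flat_map_const
    with (v := if Nat.ltb c k then length (filter (padded_RLL k 0) (words (S q) m)) else 0%nat).
  { rewrite length_seq; f_equal; lia. }
  intros a Ha; apply in_seq in Ha.
  rewrite length_filter_map_cons, (filter_ext _ (fun w => Nat.ltb c k && padded_RLL k 0 w))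
    by (intros w; apply padded_RLL_cons_nonzero; lia).
  destruct (Nat.ltb c k); [reflexivity|].
  now induction (words (S q) m).
Qed.

Lemma padded_count_0 q k c : (1 <= k)%nat ->
  padded_count q k 0 c = if Nat.ltb c k then 1%nat else 0%nat.
Proof.
  intros Hk; unfold padded_count, padded_RLL; simpl.
  replace (has_zero_run k []) with false.
  { now destruct (Nat.ltb c k). }
  symmetry; apply not_true_iff_false; intros H.
  apply has_zero_run_spec in H as [i H]; [|exact Hk].
  now rewrite zero_run_at_overflow in H by (simpl; lia).
Qed.

Lemma padded_count_full q k m : padded_count q k m k = 0%nat.
Proof.
  unfold padded_count; induction (words q m) as [|w W IH]; [reflexivity|].
  simpl; unfold padded_RLL at 1.
  replace (Nat.ltb (leading_zeros w + k) k) with false by (symmetry; apply Nat.ltb_ge; lia).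
  now rewrite andb_false_r.
Qed.

Lemma a_q_padded_count q m k : (1 <= k)%nat -> a_q q m k = padded_count q k m 0.
Proof.
  intros Hk; unfold a_q, padded_count; f_equal; apply filter_ext; intros w.
  rewrite is_RLL_no_zero_run by exact Hk; unfold padded_RLL.
  destruct (has_zero_run k w) eqn:E; [reflexivity|].
  apply leading_zeros_lt in E; [|exact Hk].
  symmetry; apply Nat.ltb_lt; lia.
Qed.

Open Scope R_scope.

(* Splitting off the first letter: a zero lengthens the zero prefix, while one of the
   q - 1 nonzero letters ends it. *)
Definition zero_prefix_recurrence (Q : R) (k : nat) (D : nat -> nat -> R) : Prop :=
  (forall m c, (c < k)%nat -> D (S m) c = D m (S c) + (Q - 1) * D m 0%nat) /\
  (forall m, D m k = 0).

Lemma zero_prefix_recurrence_nonneg Q k D : 1 <= Q -> zero_prefix_recurrence Q k D ->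
  (forall c, (c <= k)%nat -> 0 <= D 0%nat c) ->
  forall m c, (c <= k)%nat -> 0 <= D m c.
Proof.
  intros HQ [Hrec Hk] H0 m; induction m as [|m IH]; intros c Hc; [now apply H0|].
  destruct (Nat.lt_ge_cases c k) as [Hlt|Hge].
  - rewrite Hrec by exact Hlt.
    assert (0 <= D m 0%nat) by (apply IH; lia).
    assert (0 <= D m (S c)) by (apply IH; lia).
    nra.
  - replace c with k by lia; rewrite Hk; lra.
Qed.

Lemma zero_prefix_recurrence_comb Q k a b D1 D2 :
  zero_prefix_recurrence Q k D1 -> zero_prefix_recurrence Q k D2 ->
  zero_prefix_recurrence Q k (fun m c => a * D1 m c + b * D2 m c).
Proof.
  intros [R1 K1] [R2 K2]; split.
  - intros m c Hc; rewrite R1, R2 by exact Hc; ring.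
  - intros m; rewrite K1, K2; ring.
Qed.

Lemma zero_prefix_recurrence_padded_count q k : (1 <= q)%nat -> (1 <= k)%nat ->
  zero_prefix_recurrence (INR q) k (fun m c => INR (padded_count q k m c)).
Proof.
  intros Hq Hk; split.
  - intros m c Hc; rewrite padded_count_S by assumption.
    destruct (Nat.ltb_spec c k); [|lia].
    rewrite plus_INR, mult_INR, minus_INR by exact Hq; simpl; ring.
  - intros m; now rewrite padded_count_full.
Qed.

Definition rll_root (Q : R) (k : nat) (lam : R) : Prop :=
  1 < lam < Q /\ lam ^ k * (Q - lam) = Q - 1.

(* The solution of lam u_c = u_(c+1) + (Q - 1) with u_0 = 1; the root equation says
   exactly that u_k = 0. *)
Definition root_weight (Q lam : R) (c : nat) : R :=
  (Q - 1 - lam ^ c * (Q - lam)) / (lam - 1).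

Section RootWeight.
Variables (Q lam : R) (k : nat).
Hypothesis Hroot : rll_root Q k lam.

Lemma rll_root_k_pos : (1 <= k)%nat.
Proof.
  destruct Hroot as [Hlam Heq]; destruct k; [simpl in Heq; lra | lia].
Qed.

Lemma root_weight_0 : root_weight Q lam 0%nat = 1.
Proof. destruct Hroot as [Hlam _]; unfold root_weight; simpl; field; lra. Qed.

Lemma zero_prefix_recurrence_root_weight :
  zero_prefix_recurrence Q k (fun m c => lam ^ m * root_weight Q lam c).
Proof.
  destruct Hroot as [Hlam Heq]; split.
  - intros m c _; rewrite root_weight_0; unfold root_weight; simpl; field; lra.
  - intros m; unfold root_weight; rewrite Heq; unfold Rdiv; ring.
Qed.

Lemma root_weight_bounds c : (c < k)%nat ->
  (lam - 1) * root_weight Q lam c <= Q - 1 <= lam * root_weight Q lam c.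
Proof.
  destruct Hroot as [Hlam Heq]; intros Hc; unfold root_weight.
  assert (Hpos : 0 <= lam ^ c * (Q - lam)) by (apply Rmult_le_pos; [apply pow_le|]; lra).
  assert (Hmono : lam ^ S c * (Q - lam) <= Q - 1).
  { rewrite <- Heq; apply Rmult_le_compat_r; [lra|]; apply Rle_pow; [lra|lia]. }
  simpl in Hmono; split.
  - replace ((lam - 1) * ((Q - 1 - lam ^ c * (Q - lam)) / (lam - 1)))
      with (Q - 1 - lam ^ c * (Q - lam)) by (field; lra); lra.
  - replace (lam * ((Q - 1 - lam ^ c * (Q - lam)) / (lam - 1)))
      with (Q - 1 + (Q - 1 - lam * (lam ^ c * (Q - lam))) / (lam - 1)) by (field; lra).
    assert (0 <= (Q - 1 - lam * (lam ^ c * (Q - lam))) / (lam - 1))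
      by (apply Rle_mult_inv_pos; lra).
    lra.
Qed.
End RootWeight.

Lemma a_q_between q k lam m : rll_root (INR q) k lam ->
  (lam - 1) / (INR q - 1) * lam ^ m <= INR (a_q q m k) <= lam / (INR q - 1) * lam ^ m.
Proof.
  intros Hroot; pose proof (rll_root_k_pos _ _ _ Hroot) as Hk.
  pose proof Hroot as [Hlam _].
  assert (Hq : (1 <= q)%nat) by (apply INR_le; simpl; lra).
  set (count := fun m c => INR (padded_count q k m c)).
  set (weight := fun m c => lam ^ m * root_weight (INR q) lam c).
  assert (Hc : zero_prefix_recurrence (INR q) k count) by now apply zero_prefix_recurrence_padded_count.
  assert (Hw : zero_prefix_recurrence (INR q) k weight) by now apply zero_prefix_recurrence_root_weight.
  assert (Hbase : forall c, (c <= k)%nat ->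
    (lam - 1) / (INR q - 1) * weight 0%nat c <= count 0%nat c <= lam / (INR q - 1) * weight 0%nat c).
  { intros c Hck; unfold count, weight; rewrite padded_count_0 by exact Hk.
    destruct (Nat.ltb_spec c k); simpl.
    - destruct (root_weight_bounds _ _ _ Hroot c) as [Hlo Hhi]; [lia|].
      set (w := root_weight (INR q) lam c) in *.
      split; apply (Rmult_le_reg_l (INR q - 1)); try lra.
      + replace ((INR q - 1) * ((lam - 1) / (INR q - 1) * (1 * w))) with ((lam - 1) * w)
          by (field; lra).
        lra.
      + replace ((INR q - 1) * (lam / (INR q - 1) * (1 * w))) with (lam * w)
          by (field; lra); lra.
    - replace c with k by lia.
      pose proof (proj2 Hw 0%nat) as Hw0; unfold weight in Hw0; simpl in Hw0.
      rewrite Hw0; lra. }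
  rewrite a_q_padded_count by exact Hk.
  change (INR (padded_count q k m 0)) with (count m 0%nat).
  replace (lam ^ m) with (weight m 0%nat) by (unfold weight; rewrite (root_weight_0 _ _ _ Hroot); ring).
  split.
  - assert (Hlo := zero_prefix_recurrence_nonneg (INR q) k
      (fun m c => 1 * count m c + - ((lam - 1) / (INR q - 1)) * weight m c)
      ltac:(lra) (zero_prefix_recurrence_comb _ _ _ _ _ _ Hc Hw)).
    enough (0 <= 1 * count m 0%nat + - ((lam - 1) / (INR q - 1)) * weight m 0%nat) by lra.
    apply Hlo; [|lia]; intros c Hck; destruct (Hbase c Hck); lra.
  - assert (Hhi := zero_prefix_recurrence_nonneg (INR q) k
      (fun m c => lam / (INR q - 1) * weight m c + -1 * count m c)
      ltac:(lra) (zero_prefix_recurrence_comb _ _ _ _ _ _ Hw Hc)).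
    enough (0 <= lam / (INR q - 1) * weight m 0%nat + -1 * count m 0%nat) by lra.
    apply Hhi; [|lia]; intros c Hck; destruct (Hbase c Hck); lra.
Qed.

Lemma is_lim_seq_div_INR (a : R) : is_lim_seq (fun m => a / INR m) 0.
Proof.
  replace (Finite 0) with (Rbar_mult a 0) by (simpl; f_equal; ring).
  apply is_lim_seq_scal_l.
  replace (Finite 0) with (Rbar_inv p_infty) by reflexivity.
  apply is_lim_seq_inv; [apply is_lim_seq_INR | discriminate].
Qed.

Lemma is_lim_seq_ln_div_geometric (u : nat -> R) (alpha beta lam : R) :
  0 < alpha -> 0 < lam ->
  (forall m, alpha * lam ^ m <= u m <= beta * lam ^ m) ->
  is_lim_seq (fun m => ln (u m) / INR m) (ln lam).
Proof.
  intros Ha Hl Hu.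
  apply is_lim_seq_le_le_loc with
    (u := fun m => ln alpha / INR m + ln lam) (w := fun m => ln beta / INR m + ln lam).
  - exists 1%nat; intros m Hm.
    assert (Hm0 : 0 < INR m) by (apply lt_0_INR; lia).
    assert (Hp : 0 < alpha * lam ^ m) by (apply Rmult_lt_0_compat; [|apply pow_lt]; lra).
    destruct (Hu m) as [Hlo Hhi].
    assert (Hb : 0 < beta) by (apply (Rmult_lt_reg_r (lam ^ m)); [apply pow_lt|]; lra).
    assert (Hln : ln alpha + INR m * ln lam <= ln (u m) <= ln beta + INR m * ln lam).
    { rewrite <- ln_pow, <- !ln_mult by (try apply pow_lt; lra).
      split; apply ln_le; (apply Rmult_lt_0_compat; [|apply pow_lt]; lra) || lra. }
    replace (ln alpha / INR m + ln lam) with ((ln alpha + INR m * ln lam) / INR m) by (field; lra).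
    replace (ln beta / INR m + ln lam) with ((ln beta + INR m * ln lam) / INR m) by (field; lra).
    split; apply Rmult_le_compat_r; (left; apply Rinv_0_lt_compat; lra) || lra.
  - replace (Finite (ln lam)) with (Rbar_plus 0 (ln lam)) by (simpl; f_equal; ring).
    apply is_lim_seq_plus'; [apply is_lim_seq_div_INR | apply is_lim_seq_const].
  - replace (Finite (ln lam)) with (Rbar_plus 0 (ln lam)) by (simpl; f_equal; ring).
    apply is_lim_seq_plus'; [apply is_lim_seq_div_INR | apply is_lim_seq_const].
Qed.

Lemma E_kq_rll_root q k lam : rll_root (INR q) k lam -> E_kq k q = ln lam / ln 2.
Proof.
  intros Hroot; pose proof Hroot as [Hlam _].
  assert (Hcv : Un_cv (fun m => log2 (INR (a_q q m k)) / INR m) (ln lam / ln 2)).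
  { apply is_lim_seq_Reals.
    apply is_lim_seq_ext with (fun m => / ln 2 * (ln (INR (a_q q m k)) / INR m)).
    { intros m; unfold log2, Rdiv; ring. }
    replace (Finite (ln lam / ln 2)) with (Rbar_mult (/ ln 2) (ln lam))
      by (simpl; f_equal; unfold Rdiv; ring).
    apply is_lim_seq_scal_l.
    apply (is_lim_seq_ln_div_geometric _ ((lam - 1) / (INR q - 1)) (lam / (INR q - 1)));
      [apply Rdiv_lt_0_compat; lra | lra | intros m; now apply a_q_between]. }
  unfold E_kq; apply UL_sequence with (fun m => log2 (INR (a_q q m k)) / INR m); [|exact Hcv].
  apply epsilon_spec; now exists (ln lam / ln 2).
Qed.

Lemma bernoulli_ineq x n : 0 <= x <= 1 -> 1 - INR n * x <= (1 - x) ^ n.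
Proof.
  intros Hx; induction n as [|n IH]; [simpl; lra|].
  rewrite S_INR; simpl.
  assert (0 <= INR n) by apply pos_INR.
  assert ((1 - x) * (1 - INR n * x) <= (1 - x) * (1 - x) ^ n)
    by (apply Rmult_le_compat_l; lra).
  nra.
Qed.

Lemma rll_root_exists Q k : 2 <= Q -> 5 * (INR k + 2) <= Q ^ k ->
  exists lam, rll_root Q k lam /\ (Q - lam) * Q ^ k <= 2 * (Q - 1).
Proof.
  intros HQ HY; set (Y := Q ^ k) in *.
  set (t := 2 * (Q - 1) / Y).
  assert (HY0 : 0 < Y) by (pose proof (pos_INR k); lra).
  assert (HtY : t * Y = 2 * (Q - 1)) by (unfold t; field; lra).
  assert (Ht : 0 < t <= (Q - 1) / 5).
  { split; [unfold t; apply Rdiv_lt_0_compat; lra|].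
    apply (Rmult_le_reg_r Y); [exact HY0|]; rewrite HtY.
    pose proof (pos_INR k); nra. }
  set (f := fun x => Q - 1 - x ^ k * (Q - x)).
  assert (Hneg : f (Q - t) < 0).
  { unfold f; replace (Q - (Q - t)) with t by ring.
    replace (Q - t) with (Q * (1 - t / Q)) by (field; lra).
    rewrite Rpow_mult_distr; fold Y.
    assert (Hx : 0 <= t / Q <= 1).
    { split; [apply Rle_mult_inv_pos; lra|].
      apply (Rmult_le_reg_r Q); [lra|]; unfold Rdiv; rewrite Rmult_assoc, Rinv_l; lra. }
    assert (Hkt : INR k * (t / Q) <= 2 / 5).
    { apply (Rmult_le_reg_r (Q * Y)); [nra|].
      replace (INR k * (t / Q) * (Q * Y)) with (INR k * (t * Y)) by (field; lra).
      rewrite HtY; nra. }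
    pose proof (bernoulli_ineq (t / Q) k Hx).
    assert (3 / 5 * (Y * t) <= (1 - t / Q) ^ k * (Y * t))
      by (apply Rmult_le_compat_r; nra).
    nra. }
  assert (Hpos : 0 < f Q) by (unfold f; rewrite Rminus_diag, Rmult_0_r; lra).
  assert (Hcont : continuity f) by (unfold f; reg).
  destruct (IVT f (Q - t) Q Hcont ltac:(lra) Hneg Hpos) as [lam [[Hlo Hhi] Hroot]].
  exists lam; unfold f in Hroot.
  assert (lam <> Q) by (intros ->; unfold f in Hpos; lra).
  repeat split; try lra.
  apply (Rle_trans _ (t * Y)); [apply Rmult_le_compat_r|]; lra.
Qed.

Lemma ln_sub_bounds a b : 0 < a -> 0 < b -> (b - a) / b <= ln b - ln a <= (b - a) / a.
Proof.
  intros Ha Hb.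
  assert (Hup : forall x y, 0 < x -> 0 < y -> ln y - ln x <= (y - x) / x).
  { intros x y Hx Hy.
    rewrite <- (ln_exp ((y - x) / x)), <- ln_div by lra.
    apply ln_le; [apply Rdiv_lt_0_compat; lra|].
    pose proof (exp_ineq1_le ((y - x) / x)).
    replace (y / x) with (1 + (y - x) / x) by (field; lra); lra. }
  pose proof (Hup b a Hb Ha); pose proof (Hup a b Ha Hb).
  replace ((b - a) / b) with (- ((a - b) / b)) by (field; lra); lra.
Qed.

Section ExponentError.
Variables (Q lam : R) (k : nat).
Hypothesis Hroot : rll_root Q k lam.
Hypothesis Hnear : (Q - lam) * Q ^ k <= 2 * (Q - 1).
Hypothesis Hlarge : 5 * (INR k + 2) <= Q ^ k.

Lemma root_pow_succ_lower :
  Q ^ S k * (1 - 2 * (INR k + 1) / Q ^ k) <= lam ^ S k.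
Proof.
  destruct Hroot as [Hlam _]; set (Y := Q ^ k) in *.
  assert (HY0 : 0 < Y) by (apply pow_lt; lra).
  replace lam with (Q * (1 - (Q - lam) / Q)) at 1 by (field; lra).
  rewrite Rpow_mult_distr.
  assert (Hx : 0 <= (Q - lam) / Q <= 1).
  { split; [apply Rle_mult_inv_pos; lra|].
    apply (Rmult_le_reg_r Q); [lra|]; unfold Rdiv; rewrite Rmult_assoc, Rinv_l; lra. }
  pose proof (bernoulli_ineq _ (S k) Hx) as Hb; rewrite S_INR in Hb.
  assert (0 <= INR k + 1) by (pose proof (pos_INR k); lra).
  assert ((INR k + 1) * ((Q - lam) / Q) <= 2 * (INR k + 1) / Y).
  { apply (Rmult_le_reg_r (Q * Y)); [nra|].
    replace ((INR k + 1) * ((Q - lam) / Q) * (Q * Y))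
      with ((INR k + 1) * ((Q - lam) * Y)) by (field; lra).
    replace (2 * (INR k + 1) / Y * (Q * Y)) with ((INR k + 1) * (2 * Q)) by (field; lra).
    apply Rmult_le_compat_l; lra. }
  apply Rmult_le_compat_l; [apply pow_le|]; lra.
Qed.

Variables (n rho : R).
Hypothesis Hn : n = rho * Q ^ S k.
Hypothesis Hnk : INR k + 2 <= n.

Lemma exponent_error_upper :
  (n - (INR k + 2)) * (ln lam - ln Q) + (Q - 1) * rho <= (Q - 1) * (INR k + 2) / Q ^ k.
Proof.
  destruct Hroot as [Hlam Heq]; set (Y := Q ^ k).
  assert (HY0 : 0 < Y) by (apply pow_lt; lra).
  assert (Hln : ln lam - ln Q <= - ((Q - lam) / Q)) by (pose proof (ln_sub_bounds lam Q); lra).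
  assert (Hs : Q - 1 <= (Q - lam) * Y).
  { rewrite <- Heq, Rmult_comm; apply Rmult_le_compat_l; [lra|]; apply pow_incr; lra. }
  assert (Hrho : rho * (Q * Y) = n) by (rewrite Hn; unfold Y; simpl; ring).
  apply (Rle_trans _ ((n - (INR k + 2)) * (- ((Q - lam) / Q)) + (Q - 1) * rho)).
  { apply Rplus_le_compat_r, Rmult_le_compat_l; lra. }
  apply (Rmult_le_reg_r (Q * Y)); [nra|].
  replace (((n - (INR k + 2)) * - ((Q - lam) / Q) + (Q - 1) * rho) * (Q * Y))
    with (- (n - (INR k + 2)) * ((Q - lam) * Y) + (Q - 1) * n) by (rewrite <- Hrho; field; lra).
  replace ((Q - 1) * (INR k + 2) / Y * (Q * Y)) with ((Q - 1) * (INR k + 2) * Q) by (field; lra).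
  assert (- (n - (INR k + 2)) * ((Q - lam) * Y) <= - (n - (INR k + 2)) * (Q - 1)) by nra.
  assert (0 <= (Q - 1) * (INR k + 2)) by (pose proof (pos_INR k); nra).
  nra.
Qed.

Lemma exponent_error_lower : 0 <= rho ->
  - ((Q - 1) * (4 * rho) * (INR k + 2) / Q ^ k)
  <= (n - (INR k + 2)) * (ln lam - ln Q) + (Q - 1) * rho.
Proof.
  intros Hrho0; pose proof root_pow_succ_lower as HP.
  destruct Hroot as [Hlam Heq]; set (Y := Q ^ k) in *.
  assert (HY0 : 0 < Y) by (apply pow_lt; lra).
  set (d := 2 * (INR k + 1) / Y) in HP.
  assert (Hd : 0 <= d <= 2 / 5).
  { pose proof (pos_INR k); split; [apply Rle_mult_inv_pos; lra|].
    apply (Rmult_le_reg_r Y); [lra|]; unfold d, Rdiv; rewrite Rmult_assoc, Rinv_l; lra. }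
  set (P := lam ^ S k) in HP.
  assert (HP0 : 0 < P) by (apply pow_lt; lra).
  assert (HQY : Q ^ S k = Q * Y) by (unfold Y; simpl; ring).
  rewrite HQY in HP, Hn.
  assert (Hln : - ((Q - lam) / lam) <= ln lam - ln Q) by (pose proof (ln_sub_bounds lam Q); lra).
  assert (Hns : n * ((Q - lam) / lam) = (Q - 1) * rho * (Q * Y / P)).
  { assert (0 < lam ^ k) by (apply pow_lt; lra).
    rewrite Hn, <- Heq; unfold P; simpl; field; lra. }
  assert (Hratio : Q * Y / P <= 1 + 2 * d).
  { apply (Rmult_le_reg_r P); [lra|].
    replace (Q * Y / P * P) with (Q * Y) by (field; lra).
    assert ((1 + 2 * d) * (Q * Y * (1 - d)) <= (1 + 2 * d) * P) by (apply Rmult_le_compat_l; lra).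
    assert (0 <= d * (1 - 2 * d) * (Q * Y)) by (apply Rmult_le_pos; nra).
    nra. }
  apply (Rle_trans _ (- (n * ((Q - lam) / lam)) + (Q - 1) * rho)).
  - rewrite Hns.
    assert ((Q - 1) * rho * (Q * Y / P) <= (Q - 1) * rho * (1 + 2 * d))
      by (apply Rmult_le_compat_l; nra).
    assert (2 * d * ((Q - 1) * rho) <= (Q - 1) * (4 * rho) * (INR k + 2) / Y).
    { unfold d; apply (Rmult_le_reg_r Y); [lra|].
      replace (2 * (2 * (INR k + 1) / Y) * ((Q - 1) * rho) * Y)
        with ((Q - 1) * (4 * rho) * (INR k + 1)) by (field; lra).
      replace ((Q - 1) * (4 * rho) * (INR k + 2) / Y * Y)
        with ((Q - 1) * (4 * rho) * (INR k + 2)) by (field; lra).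
      apply Rmult_le_compat_l; nra. }
    nra.
  - assert (0 <= (Q - lam) / lam) by (apply Rle_mult_inv_pos; lra).
    assert ((n - (INR k + 2)) * - ((Q - lam) / lam) <= (n - (INR k + 2)) * (ln lam - ln Q))
      by (apply Rmult_le_compat_l; lra).
    pose proof (pos_INR k); nra.
Qed.
End ExponentError.

Lemma sq_le_pow2 k : ((k + 2) * (k + 2) <= 8 * 2 ^ k)%nat.
Proof.
  induction k as [|k IH]; [simpl; lia|].
  destruct k as [|k]; [simpl; lia|].
  rewrite Nat.pow_succ_r'; nia.
Qed.

Lemma is_lim_seq_linear_div_pow (Q : R) : 2 <= Q ->
  is_lim_seq (fun k => (INR k + 2) / Q ^ k) 0.
Proof.
  intros HQ.
  apply is_lim_seq_le_le_loc with (u := fun _ => 0) (w := fun k => 8 / INR k);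
    [|apply is_lim_seq_const|apply is_lim_seq_div_INR].
  exists 1%nat; intros k Hk.
  assert (Hk0 : 1 <= INR k) by (apply (le_INR 1); exact Hk).
  assert (HQk : 0 < Q ^ k) by (apply pow_lt; lra).
  assert (Hsq : (INR k + 2) * (INR k + 2) <= 8 * Q ^ k).
  { apply (Rle_trans _ (8 * 2 ^ k)).
    - pose proof (le_INR _ _ (sq_le_pow2 k)) as H.
      rewrite mult_INR, plus_INR, mult_INR, pow_INR in H; simpl in H.
      replace (1 + 1) with 2 in H by ring; lra.
    - apply Rmult_le_compat_l; [lra|]; apply pow_incr; lra. }
  split; [apply Rle_mult_inv_pos; lra|].
  apply (Rmult_le_reg_r (Q ^ k * INR k)); [nra|].
  replace ((INR k + 2) / Q ^ k * (Q ^ k * INR k)) with ((INR k + 2) * INR k) by (field; lra).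
  replace (8 / INR k * (Q ^ k * INR k)) with (8 * Q ^ k) by (field; lra).
  nra.
Qed.

Lemma Rceil_bounds x : x <= IZR (Rceil x) < x + 1.
Proof. unfold Rceil; rewrite opp_IZR; pose proof (base_Int_part (- x)); lra. Qed.

Lemma ratio_as_exp (Q E : R) (N : nat) (C z : Z) : 1 < Q -> (1 <= N)%nat ->
  let x := logb Q (INR N) in
  Rpower 2 (IZR (Z.of_nat N - (C + z) - 2) * E) /
  ((Q ^ N / INR N) * Rpower Q (x - IZR C - IZR z - 2)
   * exp (- (Q - 1) * Rpower Q (x - IZR C - IZR z - 1)))
  = exp (IZR (Z.of_nat N - (C + z) - 2) * (E * ln 2 - ln Q)
         + (Q - 1) * Rpower Q (x - IZR C - IZR z - 1)).
Proof.
  intros HQ HN x.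
  assert (HN0 : 0 < INR N) by (apply lt_0_INR; lia).
  assert (HlnQ : 0 < ln Q) by (rewrite <- ln_1; apply ln_increasing; lra).
  assert (Hx : x * ln Q = ln (INR N)) by (unfold x, logb; field; lra).
  replace (Q ^ N / INR N) with (exp (INR N * ln Q - x * ln Q)).
  2:{ unfold Rminus; rewrite exp_plus, exp_Ropp, Hx, exp_ln by lra.
       now rewrite <- (Rpower_pow N Q) by lra. }
  unfold Rpower, Rdiv.
  rewrite <- !exp_plus, <- exp_Ropp, <- exp_plus; f_equal.
  rewrite !minus_IZR, plus_IZR, <- INR_IZR_INZ; ring.
Qed.

Section Asymptotics.
Variables (q : nat) (z : Z).
Hypothesis hq : (2 <= q)%nat.

Definition run_length (n : nat) : Z := (Rceil (logb (INR q) (INR n)) + z)%Z.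

(* The paper's q^(Delta_n - z - 1), that is n / q^(k+1). *)
Definition scale (n : nat) : R :=
  Rpower (INR q) (logb (INR q) (INR n) - IZR (Rceil (logb (INR q) (INR n))) - IZR z - 1).

Definition log_ratio (n : nat) : R :=
  IZR (Z.of_nat n - run_length n - 2) * (E_kq (Z.to_nat (run_length n)) q * ln 2 - ln (INR q))
  + (INR q - 1) * scale n.

Lemma INR_q_ge_2 : 2 <= INR q.
Proof. apply (le_INR 2) in hq; simpl in hq; lra. Qed.

Lemma ln_q_pos : 0 < ln (INR q).
Proof. pose proof INR_q_ge_2; rewrite <- ln_1; apply ln_increasing; lra. Qed.

Lemma scale_bounds n :
  Rpower (INR q) (- IZR z - 2) < scale n <= Rpower (INR q) (- IZR z - 1).
Proof.
  pose proof INR_q_ge_2; pose proof (Rceil_bounds (logb (INR q) (INR n))).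
  unfold scale; split.
  - apply Rpower_lt; lra.
  - apply Rle_Rpower; lra.
Qed.

Lemma INR_scale n : (1 <= n)%nat -> (0 <= run_length n)%Z ->
  INR n = scale n * INR q ^ S (Z.to_nat (run_length n)).
Proof.
  intros Hn Hk; pose proof INR_q_ge_2; pose proof ln_q_pos.
  assert (HN0 : 0 < INR n) by (apply lt_0_INR; lia).
  rewrite <- Rpower_pow, S_INR, (INR_IZR_INZ (Z.to_nat _)), Z2Nat.id by (lra || lia).
  unfold scale, run_length, Rpower; rewrite <- exp_plus, plus_IZR.
  replace (_ + _) with (logb (INR q) (INR n) * ln (INR q)) by ring.
  unfold logb; replace (ln (INR n) / ln (INR q) * ln (INR q)) with (ln (INR n)) by (field; lra).
  now rewrite exp_ln.
Qed.

Lemma run_length_to_infty :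
  filterlim (fun n => Z.to_nat (run_length n)) eventually eventually.
Proof.
  intros P [K HK]; pose proof INR_q_ge_2; pose proof ln_q_pos.
  set (T := Rpower (INR q) (INR K - IZR z)).
  destruct (archimed T) as [HT _].
  exists (Z.to_nat (up T)); intros n Hn; apply HK.
  assert (HTn : T < INR n).
  { apply le_INR in Hn; rewrite INR_IZR_INZ, Z2Nat.id in Hn; [lra|].
    apply le_IZR; assert (0 < T) by apply exp_pos; lra. }
  assert (Hlog : INR K - IZR z < logb (INR q) (INR n)).
  { unfold logb; apply (Rmult_lt_reg_r (ln (INR q))); [lra|].
    replace (ln (INR n) / ln (INR q) * ln (INR q)) with (ln (INR n)) by (field; lra).
    rewrite <- (ln_exp ((INR K - IZR z) * ln (INR q))); apply ln_increasing; [apply exp_pos|exact HTn]. }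
  pose proof (Rceil_bounds (logb (INR q) (INR n))).
  assert (HKZ : (Z.of_nat K < run_length n)%Z).
  { apply lt_IZR; unfold run_length; rewrite plus_IZR, <- INR_IZR_INZ; lra. }
  lia.
Qed.

Lemma log_ratio_bound n : (1 <= n)%nat -> (1 <= Z.to_nat (run_length n))%nat ->
  let k := Z.to_nat (run_length n) in
  5 * (INR k + 2) <= INR q ^ k ->
  INR k + 2 <= Rpower (INR q) (- IZR z - 2) * INR q ^ k ->
  Rabs (log_ratio n)
  <= (INR q - 1) * (1 + 4 * Rpower (INR q) (- IZR z - 1)) * ((INR k + 2) / INR q ^ k).
Proof.
  intros Hn Hk1 k Hlarge Hsmall; pose proof INR_q_ge_2.
  assert (Hk : run_length n = Z.of_nat k) by (unfold k; rewrite Z2Nat.id; lia).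
  destruct (rll_root_exists (INR q) k) as [lam [Hroot Hnear]]; [lra|exact Hlarge|].
  assert (HE : E_kq k q * ln 2 = ln lam).
  { rewrite (E_kq_rll_root _ _ _ Hroot); field.
    apply Rgt_not_eq; rewrite <- ln_1; apply ln_increasing; lra. }
  pose proof (INR_scale n Hn ltac:(lia)) as Hscale; fold k in Hscale.
  destruct (scale_bounds n) as [Hrho_lo Hrho_hi].
  assert (Hrho0 : 0 < scale n) by (eapply Rlt_trans; [apply exp_pos|exact Hrho_lo]).
  assert (Hnk : INR k + 2 <= INR n).
  { rewrite Hscale; simpl.
    assert (0 <= INR q ^ k) by (apply pow_le; lra).
    assert (Rpower (INR q) (- IZR z - 2) * INR q ^ k <= scale n * INR q ^ k)
      by (apply Rmult_le_compat_r; lra).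
    assert (0 <= scale n * INR q ^ k) by (apply Rmult_le_pos; lra).
    nra. }
  assert (Hlr : log_ratio n = (INR n - (INR k + 2)) * (ln lam - ln (INR q)) + (INR q - 1) * scale n).
  { unfold log_ratio; fold k; rewrite HE, Hk, !minus_IZR, <- !INR_IZR_INZ; ring. }
  pose proof (exponent_error_upper _ _ _ Hroot _ _ Hscale Hnk) as Hup.
  pose proof (exponent_error_lower _ _ _ Hroot Hnear Hlarge _ _ Hscale Hnk
    ltac:(lra)) as Hlo.
  assert (HqPos : 0 <= (INR q - 1) * (INR k + 2) / INR q ^ k).
  { apply Rle_mult_inv_pos; [pose proof (pos_INR k); nra | apply pow_lt; lra]. }
  set (c := (INR q - 1) * (INR k + 2) / INR q ^ k) in *.
  replace ((INR q - 1) * (4 * scale n) * (INR k + 2) / INR q ^ k) with (4 * scale n * c) in Hlo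
    by (unfold c; field; apply pow_nonzero; lra).
  replace ((INR q - 1) * (1 + 4 * Rpower (INR q) (- IZR z - 1)) * ((INR k + 2) / INR q ^ k))
    with (c + 4 * Rpower (INR q) (- IZR z - 1) * c) by (unfold c; field; apply pow_nonzero; lra).
  rewrite Hlr; apply Rabs_le; split; nra.
Qed.

Lemma is_lim_seq_log_ratio : is_lim_seq log_ratio 0.
Proof.
  pose proof INR_q_ge_2.
  set (B := fun k => (INR k + 2) / INR q ^ k).
  set (Cst := (INR q - 1) * (1 + 4 * Rpower (INR q) (- IZR z - 1))).
  set (r0 := Rpower (INR q) (- IZR z - 2)).
  assert (HB : is_lim_seq (fun n => B (Z.to_nat (run_length n))) 0).
  { apply (is_lim_seq_subseq B), is_lim_seq_linear_div_pow; [apply run_length_to_infty | lra]. }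
  assert (Heps : 0 < Rmin (1 / 5) r0) by (apply Rmin_glb_lt; [lra | apply exp_pos]).
  assert (Hev : eventually (fun n => (1 <= n)%nat /\ (1 <= Z.to_nat (run_length n))%nat
                              /\ Rabs (B (Z.to_nat (run_length n)) - 0) < Rmin (1 / 5) r0)).
  { repeat apply filter_and.
    - now exists 1%nat.
    - apply run_length_to_infty; now exists 1%nat.
    - now apply (proj2 (is_lim_seq_spec _ _) HB (mkposreal _ Heps)). }
  apply is_lim_seq_le_le_loc with
    (u := fun n => - Cst * B (Z.to_nat (run_length n))) (w := fun n => Cst * B (Z.to_nat (run_length n))).
  - revert Hev; apply filter_imp; intros n [Hn [Hk HBn]].
    set (k := Z.to_nat (run_length n)) in *.
    assert (HY : 0 < INR q ^ k) by (apply pow_lt; lra).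
    assert (HBk : B k < 1 / 5 /\ B k < r0).
    { rewrite Rminus_0_r, Rabs_pos_eq in HBn by (apply Rle_mult_inv_pos; [pose proof (pos_INR k)|]; lra).
      split; eapply Rlt_le_trans; eauto; [apply Rmin_l | apply Rmin_r]. }
    unfold B in HBk; destruct HBk as [H5 Hr0].
    rewrite Ropp_mult_distr_l_reverse; apply Rabs_le_between, log_ratio_bound;
      [exact Hn | exact Hk | |].
    + apply (Rmult_lt_compat_r (INR q ^ k)) in H5; [|exact HY].
      replace ((INR k + 2) / INR q ^ k * INR q ^ k) with (INR k + 2) in H5 by (field; lra).
      fold k; lra.
    + apply (Rmult_lt_compat_r (INR q ^ k)) in Hr0; [|exact HY].
      replace ((INR k + 2) / INR q ^ k * INR q ^ k) with (INR k + 2) in Hr0 by (field; lra).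
      fold k; unfold r0 in Hr0; lra.
  - replace (Finite 0) with (Rbar_mult (- Cst) 0) by (simpl; f_equal; ring).
    now apply is_lim_seq_scal_l.
  - replace (Finite 0) with (Rbar_mult Cst 0) by (simpl; f_equal; ring).
    now apply is_lim_seq_scal_l.
Qed.
End Asymptotics.

Theorem lemma5 (q : nat) (z : Z) (hq : (2 <= q)%nat) :
  Un_cv
    (fun n : nat =>
       let k : Z := (Rceil (logb (INR q) (INR n)) + z)%Z in
       let n' : Z := (Z.of_nat n - k - 2)%Z in
       let Delta : R := logb (INR q) (INR n) - IZR (Rceil (logb (INR q) (INR n))) in
       Rpower 2 (IZR n' * E_kq (Z.to_nat k) q) /
       ((INR q ^ n / INR n) * Rpower (INR q) (Delta - IZR z - 2)
        * exp (- (INR q - 1) * Rpower (INR q) (Delta - IZR z - 1))))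
    1.
Proof.
  apply is_lim_seq_Reals.
  apply is_lim_seq_ext_loc with (fun n => exp (log_ratio q z n)).
  - exists 1%nat; intros n Hn; symmetry.
    pose proof (INR_q_ge_2 q hq).
    now rewrite ratio_as_exp by (lra || lia).
  - rewrite <- exp_0; apply is_lim_seq_continuous.
    + apply derivable_continuous_pt, derivable_pt_exp.
    + now apply is_lim_seq_log_ratio.
Qed.
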